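(* Let $t \geq 3$ be an integer and let $G$ be a finite, simple, connected graph that does not contain the path $P_t$ on $t$ vertices as an induced subgraph. Then in the game of cops and robbers on $G$, $t-2$ cops have a strategy that captures the robber in at most $t-1$ moves.
   Context: The game of cops and robbers on a finite simple graph $G$ with $k$ cops and one robber: first each cop chooses a starting vertex, then the robber chooses a starting vertex; thereafter the players alternate turns, starting with the cops. On the cops' turn, each cop either stays at its vertex or moves to an adjacent vertex; on the robber's turn, the robber either stays at his vertex or moves to an adjacent vertex. The cops capture the robber (and win) if at some point a cop occupies the same vertex as the robber. A ''move'' counts one turn of the cop player (the initial placement of the cops counting as the first move). $P_t$ denotes the path graph on $t$ vertices, and ''induced subgraph'' has its usual meaning. *)

From mathcomp Require Import all_boot.
Set Implicit Arguments. Unset Strict Implicit. Unset Printing Implicit Defensive.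

Definition simple_graph (T : finType) (e : rel T) : Prop :=
  symmetric e /\ irreflexive e.

Definition connected_graph (T : finType) (e : rel T) : Prop :=
  0 < #|T| /\ forall x y : T, connect e x y.

Definition has_induced_path (T : finType) (e : rel T) (t : nat) : Prop :=
  exists f : 'I_t -> T, injective f /\
    forall i j : 'I_t, e (f i) (f j) = ((i.+1 == j) || (j.+1 == i)).

Definition cops_pos (T : finType) (k : nat) := {ffun 'I_k -> T}.

Definition caught (T : finType) (k : nat) (C : cops_pos T k) (r : T) : Prop :=
  exists i : 'I_k, C i = r.

Definition cop_step (T : finType) (e : rel T) (k : nat) (C C' : cops_pos T k) : Prop :=
  forall i : 'I_k, C' i = C i \/ e (C i) (C' i).

Definition robber_step (T : finType) (e : rel T) (r r' : T) : Prop :=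
  r' = r \/ e r r'.

(* cops_win e n C r : with the cops at C, the robber at r and the cops to
   play, the cops can force capture within at most n further cop moves
   (capture happening either when a cop lands on the robber or when the
   robber lands on a cop). *)
Fixpoint cops_win (T : finType) (e : rel T) (k : nat) (n : nat)
    (C : cops_pos T k) (r : T) : Prop :=
  match n with
  | 0 => caught C r
  | n'.+1 => caught C r \/
      exists C' : cops_pos T k, cop_step e C C' /\
        (caught C' r \/
         forall r' : T, robber_step e r r' -> cops_win e n' C' r')
  end.

(* k cops capture the robber in at most m moves, where the initial
   placement of the cops counts as the first move: the cops choose a
   placement C0, then for every starting vertex r0 of the robber the cops
   can force capture within m - 1 further cop moves. *)
Definition cops_capture_within (T : finType) (e : rel T) (k m : nat) : Prop :=
  exists C0 : cops_pos T k, forall r0 : T, cops_win e (m.-1) C0 r0.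

From mathcomp Require Import all_boot zify.

(* The cops occupy an induced path v_1 ... v_j of G, one cop per vertex and
   all surplus cops on v_j.  Unless the robber is already in the closed
   neighbourhood of the path (and is caught at once), he can be reached from
   v_j by a walk avoiding v_j and the closed neighbourhood of v_1 ... v_(j-1).
   The surplus cops step to the last vertex u of that walk adjacent to v_j:
   then v_1 ... v_j u is again an induced path and the robber is still confined
   beyond u.  The vertex w after u on the walk extends the path once more, so a
   robber that escaped the neighbourhood of the path after t - 3 rounds would
   exhibit an induced P_t. *)

Lemma has_split_last (A : eqType) (p : pred A) (s : seq A) :
  has p s -> exists s1 u s2, [/\ s = s1 ++ u :: s2, p u & ~~ has p s2].
Proof.
elim: s => //= x s IH; case ps: (has p s) => [|] /=.
  by have [s1 [u [s2 [-> pu ns2]]]] := IH ps; exists (x :: s1), u, s2.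
by rewrite orbF => px; exists [::], x, s; rewrite ps.
Qed.

Section PathStrategy.

Set Implicit Arguments. Unset Strict Implicit.

Variables (T : finType) (e : rel T).
Hypotheses (e_sym : symmetric e) (e_irr : irreflexive e).

Definition far (P : seq T) (w : T) : bool :=
  all (fun v => (v != w) && ~~ e v w) P.

Lemma far_rcons P v w : far (rcons P v) w = ((v != w) && ~~ e v w) && far P w.
Proof. exact: all_rcons. Qed.

Lemma far_notin P w : far P w -> w \notin P.
Proof. by move=> farw; apply/negP => /(allP farw); rewrite eqxx. Qed.

Definition induced_path (x0 : T) (P : seq T) : Prop :=
  uniq P /\ forall a b, a < size P -> b < size P ->
    e (nth x0 P a) (nth x0 P b) = (a.+1 == b) || (b.+1 == a).

Lemma induced_path1 x0 v : induced_path x0 [:: v].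
Proof. by split=> // [[|a] [|b]] //= _ _; rewrite e_irr. Qed.

Lemma induced_rcons x0 P y :
  induced_path x0 P -> y \notin P ->
  (forall a, a < size P -> e (nth x0 P a) y = (a.+1 == size P)) ->
  induced_path x0 (rcons P y).
Proof.
move=> [uniqP adjP] yP adjy; split; first by rewrite rcons_uniq yP.
move=> a b; rewrite !size_rcons !ltnS !nth_rcons.
rewrite leq_eqVlt => /orP[/eqP-> | aP]; rewrite leq_eqVlt => /orP[/eqP-> | bP];
  rewrite ?ltnn ?eqxx ?aP ?bP.
- by rewrite e_irr eqn_leq ltnn.
- by rewrite e_sym adjy //; lia.
- by rewrite adjy //; lia.
- exact: adjP.
Qed.

Lemma induced_extend x0 P x y :
  induced_path x0 (rcons P x) -> far P y -> e x y -> y != x ->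
  induced_path x0 (rcons (rcons P x) y).
Proof.
move=> indPx farPy xy yx; apply: induced_rcons => //.
  by rewrite mem_rcons in_cons negb_or yx far_notin.
rewrite size_rcons => a; rewrite ltnS leq_eqVlt nth_rcons.
case/orP=> [/eqP-> | aP]; first by rewrite ltnn !eqxx.
have /andP[_ /negbTE not_y] := allP farPy _ (mem_nth x0 aP).
by rewrite aP not_y; lia.
Qed.

Lemma induced_has_path x0 P : induced_path x0 P -> has_induced_path e (size P).
Proof.
move=> [uniqP adjP]; exists (fun i : 'I_(size P) => nth x0 P i); split.
  by move=> i j /eqP; rewrite nth_uniq // => /eqP /val_inj.
by move=> i j; apply: adjP.
Qed.

(* Cop [j] stands on the [j]-th vertex of [P]; the cops beyond [size P]
   all stand on [v], the default value of [nth]. *)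
Definition cops_on (k : nat) (P : seq T) (v : T) : cops_pos T k :=
  [ffun j : 'I_k => nth v P j].

Lemma nth_rcons_default (v : T) P j : nth v (rcons P v) j = nth v P j.
Proof.
rewrite nth_rcons; case: ltngtP => // [jP | ->]; last by rewrite nth_default.
by rewrite nth_default // ltnW.
Qed.

Lemma cops_on_mem k P v p :
  size P < k -> p \in rcons P v -> exists i, cops_on k P v i = p.
Proof.
move=> Pk pPv; have ip : index p (rcons P v) < k.
  by rewrite -index_mem size_rcons in pPv; exact: leq_trans pPv Pk.
by exists (Ordinal ip); rewrite ffunE -nth_rcons_default nth_index.
Qed.

Lemma cops_on_step k P v u :
  e v u -> cop_step e (cops_on k P v) (cops_on k (rcons P v) u).
Proof.
move=> vu j; rewrite !ffunE nth_rcons; case: ltngtP => [jP | jP | ->].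
- by left; apply: set_nth_default.
- by right; rewrite nth_default // ltnW.
- by left; rewrite nth_default.
Qed.

Lemma caught_win k n (C : cops_pos T k) r : caught C r -> cops_win e n C r.
Proof. by case: n => [|n] //= ?; left. Qed.

Lemma adjacent_win k n (C : cops_pos T k) r :
  (exists i, e (C i) r) -> cops_win e n.+1 C r.
Proof.
move=> [i Cir]; right; exists [ffun j => if j == i then r else C j]; split.
  by move=> j; rewrite ffunE; case: eqP => [->|_]; [right | left].
by left; exists i; rewrite ffunE eqxx.
Qed.

Lemma cops_on_win_near k n P v r :
  size P < k -> ~~ far (rcons P v) r -> cops_win e n.+1 (cops_on k P v) r.
Proof.
move=> Pk /allPn [p pPv]; have [i Cip] := cops_on_mem Pk pPv.
rewrite negb_and negbK => /orP[/eqP pr | /negPn pr].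
  by apply: caught_win; exists i; rewrite Cip.
by apply: adjacent_win; exists i; rewrite Cip.
Qed.

Definition reachable_avoiding (P : seq T) (v r : T) : Prop :=
  exists s, [/\ path e v s, last v s = r & all (fun w => far P w && (w != v)) s].

Lemma connect_reachable_avoiding v r :
  connect e v r -> reachable_avoiding [::] v r.
Proof.
case/connectP=> s vs ->; case: (shortenP vs) => s' vs' /andP[v_notin_s' _] _.
by exists s'; split=> //; apply/allP => w ws'; apply: contraNneq v_notin_s' => <-.
Qed.

Lemma reachable_avoiding_first P u r :
  reachable_avoiding P u r -> r != u -> exists w, [/\ e u w, far P w & w != u].
Proof.
case=> [[|w s] [/= us sr s_far]] ru; first by rewrite -sr eqxx in ru.
by move: us s_far => /andP[uw _] /andP[/andP[farw wu] _]; exists w.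
Qed.

(* [u] is the last vertex of the walk adjacent to [v]. *)
Lemma reachable_avoiding_advance P v r :
  far (rcons P v) r -> reachable_avoiding P v r ->
  exists u, [/\ e v u, far P u, u != v, r != u &
                reachable_avoiding (rcons P v) u r].
Proof.
rewrite far_rcons => /andP[/andP[vr not_vr] _] [s [vs sr s_far]].
have /has_split_last [s1 [u [s2 [s_eq vu s2v]]]] : has (e v) s.
  case: s vs sr {s_far} => [_ vr_eq | w s /= /andP[-> _] _] //.
  by rewrite -vr_eq eqxx in vr.
move: vs sr s_far; rewrite s_eq cat_path last_cat all_cat /=.
case/andP=> _ /andP[_ us2] s2r /and3P[_ /andP[farPu uv] s2_far].
exists u; split=> //; first by apply: contraNneq not_vr => ->.
exists s2; split=> //; apply/allP => x xs2.
have not_vx : ~~ e v x by apply: (hasPn s2v).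
have /andP[farPx xv] := allP s2_far x xs2.
rewrite far_rcons eq_sym xv not_vx farPx /=.
by apply: contraNneq not_vx => ->.
Qed.

Lemma reachable_avoiding_step P u r r' :
  reachable_avoiding P u r -> robber_step e r r' ->
  ~~ far (rcons P u) r' \/ reachable_avoiding P u r'.
Proof.
move=> [s [us sr s_far]] [-> | rr']; first by right; exists s.
case farr': (far (rcons P u) r'); [right | by left].
move: farr'; rewrite far_rcons => /andP[/andP[ur' _] farPr'].
exists (rcons s r'); split; first by rewrite rcons_path us sr.
  exact: last_rcons.
by rewrite all_rcons farPr' eq_sym ur'.
Qed.

Lemma path_strategy_wins x0 k n P v r :
  ~ has_induced_path e k.+2 -> size P + n = k -> 0 < n ->
  induced_path x0 (rcons P v) ->
  ~~ far (rcons P v) r \/ reachable_avoiding P v r ->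
  cops_win e n (cops_on k P v) r.
Proof.
move=> noPk; elim: n P v r => // n IH P v r sizeP _ indPv.
case farr: (far (rcons P v) r); last first.
  by move=> _; apply: cops_on_win_near; [lia | rewrite farr].
case=> [// | reach].
have [u [vu farPu uv ru reach']] := reachable_avoiding_advance farr reach.
have [w [uw farw wu]] := reachable_avoiding_first reach' ru.
have indPvu := induced_extend indPv farPu vu uv.
have n_gt0 : 0 < n.
  case: n {IH} sizeP => // sizeP; case: noPk.
  have := induced_has_path (induced_extend indPvu farw uw wu).
  by rewrite !size_rcons -sizeP addn1.
right; exists (cops_on k (rcons P v) u); split; first exact: cops_on_step.
right=> r' rr'; apply: IH => //; first by rewrite size_rcons; lia.
exact: reachable_avoiding_step reach' rr'.
Qed.

End PathStrategy.

Theorem mainTheorem1 (t : nat) (T : finType) (e : rel T) :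
  3 <= t ->
  simple_graph e ->
  connected_graph e ->
  ~ has_induced_path e t ->
  cops_capture_within e (t - 2) (t - 1).
Proof.
move=> t_ge3 [e_sym e_irr] [/card_gt0P [v _] conn] noPt.
exists (cops_on (t - 2) [::] v) => r.
have -> : (t - 1).-1 = t - 2 by lia.
apply: (path_strategy_wins e_sym e_irr (x0 := v)) => //.
- by have -> : (t - 2).+2 = t by lia.
- lia.
- exact: induced_path1.
- by right; apply: connect_reachable_avoiding.
Qed.
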